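(* For every positive integer $k$, every real $0\le\gamma\le1$ and every real $x\ge k$, $$\sum_{i=0}^k\binom{x}{i}\gamma^i\ \ge\ \frac14\Big(\sum_{i=0}^k\binom{x}{i}\Big)^{\log_2(1+\gamma)}.$$
   Context: For real $y$ and integer $i\ge0$, $\binom{y}{i}=y(y-1)\cdots(y-i+1)/i!$. *)

From Stdlib Require Import Reals Arith Factorial.
Open Scope R_scope.

Fixpoint falling (y : R) (i : nat) : R :=
  match i with
  | O => 1
  | S j => falling y j * (y - INR j)
  end.

Definition binomR (y : R) (i : nat) : R := falling y i / INR (fact i).

Definition log2 (t : R) : R := ln t / ln 2.

From Stdlib Require Import Reals Lra Lia Factorial.
From Coquelicot Require Import Coquelicot.
Open Scope R_scope.

(* Write P(t) = sum_{i<=k} C(x,i) t^i.  The gap h(t) = ln P(t) - ln P(1) log2(1+t)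
   vanishes at t = 0 and t = 1.  Truncating the identity (1+t) P' = x P satisfied by
   (1+t)^x at degree k gives
     (1+t) h'(t) = x - x C(x-1,k) t^k / P(t) - ln P(1) / ln 2,
   which is nonincreasing because t^k / P(t) is nondecreasing for nonnegative
   coefficients.  So h first increases and then decreases on [0,1], hence h >= 0 there:
   the bound holds even without the factor 1/4, and also for k = 0. *)

Definition binom_partial (x : R) (k : nat) (t : R) : R :=
  sum_f_R0 (fun i => binomR x i * t ^ i) k.

Lemma falling_S_shift (x : R) (n : nat) : falling x (S n) = x * falling (x - 1) n.
Proof.
  induction n as [|n IH]; [simpl; ring|].
  change (falling x (S (S n))) with (falling x (S n) * (x - INR (S n))).
  change (falling (x - 1) (S n)) with (falling (x - 1) n * (x - 1 - INR n)).
  rewrite IH, S_INR; ring.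
Qed.

Lemma falling_ge0 (y : R) (n : nat) : INR n <= y + 1 -> 0 <= falling y n.
Proof.
  induction n as [|n IH]; intro Hn; simpl; [lra|].
  rewrite S_INR in Hn; pose proof (pos_INR n).
  apply Rmult_le_pos; [apply IH|]; lra.
Qed.

Lemma binomR_0 (x : R) : binomR x 0 = 1.
Proof. unfold binomR; simpl; field. Qed.

Lemma binomR_absorb (x : R) (n : nat) :
  INR (S n) * binomR x (S n) = x * binomR (x - 1) n.
Proof.
  unfold binomR; rewrite falling_S_shift.
  change (fact (S n)) with (S n * fact n)%nat; rewrite mult_INR.
  pose proof (INR_fact_neq_0 n);
  assert (INR (S n) <> 0) by (apply not_0_INR; lia).
  field; auto.
Qed.

Lemma binomR_pascal (x : R) (n : nat) :
  binomR x (S n) = binomR (x - 1) (S n) + binomR (x - 1) n.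
Proof.
  unfold binomR; rewrite falling_S_shift.
  change (falling (x - 1) (S n)) with (falling (x - 1) n * (x - 1 - INR n)).
  change (fact (S n)) with (S n * fact n)%nat; rewrite mult_INR.
  pose proof (INR_fact_neq_0 n).
  assert (INR (S n) <> 0) by (apply not_0_INR; lia).
  rewrite S_INR in *; field; auto.
Qed.

Lemma binomR_ge0 (y : R) (n : nat) : INR n <= y + 1 -> 0 <= binomR y n.
Proof.
  intro Hn; unfold binomR.
  apply Rmult_le_pos; [now apply falling_ge0|].
  apply Rlt_le, Rinv_0_lt_compat, lt_0_INR, lt_O_fact.
Qed.

Lemma binom_partial_0 (x : R) (k : nat) : binom_partial x k 0 = 1.
Proof.
  unfold binom_partial; induction k as [|k IH]; simpl.
  - rewrite binomR_0; ring.
  - rewrite IH; ring.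
Qed.

Lemma binom_partial_1 (x : R) (k : nat) :
  binom_partial x k 1 = sum_f_R0 (fun i => binomR x i) k.
Proof. apply sum_eq; intros i _; rewrite pow1; ring. Qed.

Lemma binom_partial_ge1 (x : R) (k : nat) (t : R) :
  INR k <= x + 1 -> 0 <= t -> 1 <= binom_partial x k t.
Proof.
  unfold binom_partial; induction k as [|k IH]; intros Hk Ht; simpl.
  - rewrite binomR_0; lra.
  - rewrite S_INR in Hk; pose proof (pos_INR k).
    assert (0 <= binomR x (S k) * (t * t ^ k)).
    { apply Rmult_le_pos; [apply binomR_ge0; rewrite S_INR; lra|].
      apply Rmult_le_pos; [|apply pow_le]; lra. }
    assert (1 <= sum_f_R0 (fun i => binomR x i * t ^ i) k) by (apply IH; lra).
    lra.
Qed.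

Lemma is_derive_binom_partial (x : R) (k : nat) (t : R) : 1 + t <> 0 ->
  is_derive (binom_partial x k) t
    (x * (binom_partial x k t - binomR (x - 1) k * t ^ k) / (1 + t)).
Proof.
  intro Ht; induction k as [|k IH].
  - unfold binom_partial; simpl; rewrite !binomR_0.
    replace (x * (1 * 1 - 1 * 1) / (1 + t)) with 0 by (field; auto).
    auto_derive; [exact I | ring].
  - assert (Hterm : is_derive (fun u => binomR x (S k) * u ^ S k) t
                      (INR (S k) * binomR x (S k) * t ^ k)).
    { auto_derive; [exact I | simpl; ring]. }
    eapply is_derive_ext; [intro u; reflexivity|].
    replace (x * (binom_partial x (S k) t - binomR (x - 1) (S k) * t ^ S k) / (1 + t))
      with (plus (x * (binom_partial x k t - binomR (x - 1) k * t ^ k) / (1 + t))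
                 (INR (S k) * binomR x (S k) * t ^ k)).
    + exact (is_derive_plus _ _ _ _ _ IH Hterm).
    + unfold plus; cbn -[INR]; unfold binom_partial; simpl sum_f_R0.
      rewrite binomR_absorb, (binomR_pascal x k).
      field; auto.
Qed.

Lemma pow_mul_pow_le (t1 t2 : R) (i k : nat) :
  0 <= t1 <= t2 -> (i <= k)%nat -> t1 ^ k * t2 ^ i <= t2 ^ k * t1 ^ i.
Proof.
  intros Ht Hik.
  replace k with (i + (k - i))%nat by lia; rewrite !pow_add.
  assert (t1 ^ (k - i) <= t2 ^ (k - i)) by (apply pow_incr; lra).
  assert (0 <= t1 ^ i * t2 ^ i) by (apply Rmult_le_pos; apply pow_le; lra).
  nra.
Qed.

Lemma pow_mul_poly_le (a : nat -> R) (k : nat) (t1 t2 : R) :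
  (forall i, (i <= k)%nat -> 0 <= a i) -> 0 <= t1 <= t2 ->
  t1 ^ k * sum_f_R0 (fun i => a i * t2 ^ i) k
  <= t2 ^ k * sum_f_R0 (fun i => a i * t1 ^ i) k.
Proof.
  intros Ha Ht; rewrite !scal_sum; apply sum_Rle; intros i Hi.
  pose proof (pow_mul_pow_le t1 t2 i k Ht Hi).
  pose proof (Ha i Hi); nra.
Qed.

Lemma nondecreasing_of_derive_ge0 (f df : R -> R) (a b : R) : a <= b ->
  (forall t, a <= t <= b -> is_derive f t (df t)) ->
  (forall t, a <= t <= b -> 0 <= df t) -> f a <= f b.
Proof.
  intros Hab Hd Hpos.
  destruct (MVT_gen f a b df) as [c [Hc Hfc]];
    rewrite ?Rmin_left, ?Rmax_right in * by lra.
  - intros t Ht; apply Hd; lra.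
  - intros t Ht; apply continuity_pt_filterlim, (ex_derive_continuous f).
    exists (df t); apply Hd; lra.
  - assert (0 <= df c) by (apply Hpos; lra); nra.
Qed.

Lemma ge0_of_derive_sign_nonincreasing (h s w : R -> R) (a b : R) :
  (forall t, a <= t <= b -> is_derive h t (s t * w t)) ->
  (forall t, a <= t <= b -> 0 <= w t) ->
  (forall t1 t2, a <= t1 -> t1 <= t2 -> t2 <= b -> s t2 <= s t1) ->
  0 <= h a -> 0 <= h b -> forall t, a <= t <= b -> 0 <= h t.
Proof.
  intros Hd Hw Hs Ha Hb t Ht.
  destruct (Rle_lt_dec 0 (s t)) as [Hst | Hst].
  - enough (h a <= h t) by lra.
    apply (nondecreasing_of_derive_ge0 h (fun u => s u * w u)); [lra | |].
    + intros u Hu; apply Hd; lra.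
    + intros u Hu; apply Rmult_le_pos; [|apply Hw; lra].
      enough (s t <= s u) by lra; apply Hs; lra.
  - enough (- h t <= - h b) by lra.
    apply (nondecreasing_of_derive_ge0 (fun u => - h u) (fun u => - (s u * w u)));
      [lra | |].
    + intros u Hu; apply (is_derive_opp h), Hd; lra.
    + intros u Hu.
      assert (s u <= s t) by (apply Hs; lra).
      assert (0 <= w u) by (apply Hw; lra).
      nra.
Qed.

Lemma pow_div_binom_partial_le (x : R) (k : nat) (t1 t2 : R) :
  INR k <= x + 1 -> 0 <= t1 <= t2 ->
  t1 ^ k / binom_partial x k t1 <= t2 ^ k / binom_partial x k t2.
Proof.
  intros Hk Ht.
  assert (P1 := binom_partial_ge1 x k t1 Hk ltac:(lra)).
  assert (P2 := binom_partial_ge1 x k t2 Hk ltac:(lra)).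
  assert (Hcross := pow_mul_poly_le (binomR x) k t1 t2).
  fold (binom_partial x k t1) (binom_partial x k t2) in Hcross.
  apply (Rmult_le_reg_r (binom_partial x k t1 * binom_partial x k t2)); [nra|].
  field_simplify; try lra.
  rewrite (Rmult_comm (binom_partial x k t1)).
  apply Hcross; [|lra].
  intros i Hi; apply binomR_ge0; apply le_INR in Hi; lra.
Qed.

Lemma is_derive_ln_binom_partial (x : R) (k : nat) (t : R) :
  INR k <= x + 1 -> 0 <= t ->
  is_derive (fun u => ln (binom_partial x k u)) t
    (x * (1 - binomR (x - 1) k * (t ^ k / binom_partial x k t)) * / (1 + t)).
Proof.
  intros Hk Ht.
  assert (HP := binom_partial_ge1 x k t Hk Ht).
  eapply is_derive_ext; [intro u; reflexivity|].
  replace (x * (1 - binomR (x - 1) k * (t ^ k / binom_partial x k t)) * / (1 + t))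
    with (scal (x * (binom_partial x k t - binomR (x - 1) k * t ^ k) / (1 + t))
               (/ binom_partial x k t)).
  - apply (is_derive_comp ln (binom_partial x k)).
    + apply is_derive_ln; lra.
    + apply is_derive_binom_partial; lra.
  - unfold scal; simpl; unfold mult; simpl; field; lra.
Qed.

Lemma binom_partial_ge_Rpower (x : R) (k : nat) (gamma : R) :
  INR k <= x -> 0 <= gamma <= 1 ->
  Rpower (binom_partial x k 1) (log2 (1 + gamma)) <= binom_partial x k gamma.
Proof.
  intros Hk Hg.
  set (P := binom_partial x k); set (K := ln (P 1)).
  assert (Hx : 0 <= x) by (pose proof (pos_INR k); lra).
  assert (HP : forall t, 0 <= t -> 1 <= P t)
    by (intros; apply binom_partial_ge1; lra).
  assert (Hc : 0 <= binomR (x - 1) k) by (apply binomR_ge0; lra).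
  assert (Hln2 : 0 < ln 2) by (pose proof ln_lt_2; lra).
  assert (Hgap : 0 <= ln (P gamma) - K * log2 (1 + gamma)).
  { apply (ge0_of_derive_sign_nonincreasing
             (fun t => ln (P t) - K * log2 (1 + t))
             (fun t => x - x * binomR (x - 1) k * (t ^ k / P t) - K / ln 2)
             (fun t => / (1 + t)) 0 1); [| | | | | lra].
    - intros t Ht.
      assert (Hlog : is_derive (fun u => K * log2 (1 + u)) t (K / ln 2 * / (1 + t))).
      { unfold log2; auto_derive; [lra | field; lra]. }
      assert (Hd := is_derive_minus _ _ _ _ _
                      (is_derive_ln_binom_partial x k t ltac:(lra) ltac:(lra)) Hlog).
      unfold minus, plus, opp in Hd; simpl in Hd.
      eapply is_derive_ext; [intro u; reflexivity|].
      replace (_ * _) with (x * (1 - binomR (x - 1) k * (t ^ k / P t)) * / (1 + t)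
                            + - (K / ln 2 * / (1 + t))) by ring.
      exact Hd.
    - intros t Ht; apply Rlt_le, Rinv_0_lt_compat; lra.
    - intros t1 t2 H1 H12 H2.
      assert (t1 ^ k / P t1 <= t2 ^ k / P t2)
        by (apply pow_div_binom_partial_le; lra).
      assert (0 <= x * binomR (x - 1) k) by (apply Rmult_le_pos; lra).
      nra.
    - unfold P, log2; rewrite binom_partial_0, Rplus_0_r, ln_1; lra.
    - unfold log2; replace (1 + 1) with 2 by ring.
      replace (ln 2 / ln 2) with 1 by (field; lra); unfold K; lra. }
  assert (HPg := HP gamma ltac:(lra)).
  destruct (Rle_or_lt (Rpower (P 1) (log2 (1 + gamma))) (P gamma)) as [Hle | Hlt];
    [exact Hle|].
  apply ln_increasing in Hlt; [|lra].
  rewrite ln_Rpower in Hlt; unfold K in Hgap; lra.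
Qed.

Theorem lemma2p4 (k : nat) (gamma x : R) :
  (1 <= k)%nat -> 0 <= gamma <= 1 -> INR k <= x ->
  sum_f_R0 (fun i => binomR x i * gamma ^ i) k >=
  / 4 * Rpower (sum_f_R0 (fun i => binomR x i) k) (log2 (1 + gamma)).
Proof.
  intros _ Hg Hk.
  rewrite <- binom_partial_1.
  assert (Hpos : 0 < Rpower (binom_partial x k 1) (log2 (1 + gamma))) by apply exp_pos.
  pose proof (binom_partial_ge_Rpower x k gamma Hk Hg).
  unfold binom_partial in *; lra.
Qed.
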